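(* Let $\mathfrak g$ be the $7$-dimensional real Lie algebra described in the context, with parameters $x,y,z,w$ and $A,B,C$, and let $\varphi=e^{127}+e^{347}+e^{567}+e^{135}-e^{146}-e^{236}-e^{245}$. Then $d\varphi=0$ if and only if $$\theta(A)\omega_1=\theta(B)\omega_7+x\omega_1+y\omega_2,\qquad \theta(A)\omega_2=\theta(C)\omega_7+z\omega_1+w\omega_2,\qquad \theta(B)\omega_2=\theta(C)\omega_1.$$
   Context: Let $\mathfrak g$ be a real Lie algebra with basis $\{e_1,\dots,e_7\}$ and dual basis $\{e^1,\dots,e^7\}$; write $e^{ij\cdots k}=e^i\wedge\cdots\wedge e^k$. Put $\mathfrak g_1=\mathrm{span}\{e_3,e_4,e_5,e_6\}$. The bracket is determined by $x,y,z,w\in\mathbb R$ and $A,B,C\in\mathfrak{gl}_4(\mathbb R)$ (matrices w.r.t. $e_3,\dots,e_6$) by: $[e_1,e_2]=0$, $[e_7,e_1]=xe_1+ye_2$, $[e_7,e_2]=ze_1+we_2$, $[e_7,v]=Av$, $[e_1,v]=Bv$, $[e_2,v]=Cv$ for $v\in\mathfrak g_1$, $[\mathfrak g_1,\mathfrak g_1]=0$; it is assumed that $\mathrm{tr}B=\mathrm{tr}C=0$, $[A,B]=xB+yC$, $[A,C]=zB+wC$, $[B,C]=0$. The exterior derivative on $\Lambda^k\mathfrak g^*$ is $d\alpha(X_0,\dots,X_k)=\sum_{i<j}(-1)^{i+j}\alpha([X_i,X_j],X_0,\dots,\widehat{X_i},\dots,\widehat{X_j},\dots,X_k)$. $\omega_7=e^{34}+e^{56}$,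 $\omega_1=e^{35}-e^{46}$, $\omega_2=-e^{36}-e^{45}$, regarded as elements of $\Lambda^2\mathfrak g_1^*$. For $M\in\mathfrak{gl}_4(\mathbb R)$, $\theta(M)$ is the derivation of $\Lambda\mathfrak g_1^*$ given by $\theta(M)\alpha(X_1,\dots,X_k)=-\sum_i\alpha(X_1,\dots,MX_i,\dots,X_k)$. *)

(* Indices: e_1,...,e_7 of g are the basis column vectors
   'e_0,...,'e_6 of 'cV[R]_7 (0-based); g1 = span{e_3,...,e_6} is identified
   with 'cV[R]_4 via indices 2..5. *)
From HB Require Import structures.
From mathcomp Require Import all_boot all_order all_algebra.
Set Implicit Arguments. Unset Strict Implicit. Unset Printing Implicit Defensive.
Import Order.TTheory GRing.Theory Num.Theory.
Local Open Scope ring_scope.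

Section Defs.
Variable R : realFieldType.

Definition ebas (j : 'I_7) : 'cV[R]_7 := delta_mx j 0.
Definition ebn (j : nat) : 'cV[R]_7 := ebas (inord j).

Definition emb (v : 'cV[R]_4) : 'cV[R]_7 :=
  \col_(i < 7) (if (2 <= i < 6)%N then v (inord (i - 2)) 0 else 0).
Definition proj (X : 'cV[R]_7) : 'cV[R]_4 := \col_(k < 4) X (inord (k + 2)) 0.

Definition ad7 (x y z w : R) (A : 'M[R]_4) (j : 'I_7) : 'cV[R]_7 :=
  if val j == 0%N then x *: ebn 0 + y *: ebn 1
  else if val j == 1%N then z *: ebn 0 + w *: ebn 1
  else emb (A *m proj (ebas j)).
Definition ad1 (B : 'M[R]_4) (j : 'I_7) : 'cV[R]_7 := emb (B *m proj (ebas j)).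

(* the bracket [e_i, e_j] as described: [e1,e2]=0, [e7,e1]=x e1+y e2,
   [e7,e2]=z e1+w e2, [e7,v]=Av, [e1,v]=Bv, [e2,v]=Cv, [g1,g1]=0,
   extended antisymmetrically *)
Definition brb (x y z w : R) (A B C : 'M[R]_4) (i j : 'I_7) : 'cV[R]_7 :=
  if val i == 6%N then ad7 x y z w A j
  else if val j == 6%N then - ad7 x y z w A i
  else if val i == 0%N then ad1 B j
  else if val j == 0%N then - ad1 B i
  else if val i == 1%N then ad1 C j
  else if val j == 1%N then - ad1 C i
  else 0.

Definition bracket (x y z w : R) (A B C : 'M[R]_4) (X Y : 'cV[R]_7) : 'cV[R]_7 :=
  \sum_(i < 7) \sum_(j < 7) (X i 0 * Y j 0) *: brb x y z w A B C i j.

(* e^{abc}(X,Y,Z) = det (e^{a_r}(X_s)) on g (1-based indices a b c) *)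
Definition e3 (a b c : nat) (X Y Z : 'cV[R]_7) : R :=
  \det (\matrix_(r < 3, s < 3)
          (nth 0 [:: X; Y; Z] s) (inord ((nth 0%N [:: a; b; c] r) - 1)) 0).

(* e^{ab}(X,Y) on g1 (1-based indices a b in {3,..,6}) *)
Definition e2 (a b : nat) (X Y : 'cV[R]_4) : R :=
  \det (\matrix_(r < 2, s < 2)
          (nth 0 [:: X; Y] s) (inord ((nth 0%N [:: a; b] r) - 3)) 0).

Definition phi (X Y Z : 'cV[R]_7) : R :=
  e3 1 2 7 X Y Z + e3 3 4 7 X Y Z + e3 5 6 7 X Y Z + e3 1 3 5 X Y Z
  - e3 1 4 6 X Y Z - e3 2 3 6 X Y Z - e3 2 4 5 X Y Z.

(* exterior derivative of a 3-form:
   d a (X0,..,X3) = sum_{i<j} (-1)^(i+j) a([Xi,Xj], X0,..^i..^j..,X3) *)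
Definition d3 (br : 'cV[R]_7 -> 'cV[R]_7 -> 'cV[R]_7)
  (a : 'cV[R]_7 -> 'cV[R]_7 -> 'cV[R]_7 -> R) (X0 X1 X2 X3 : 'cV[R]_7) : R :=
  - a (br X0 X1) X2 X3 + a (br X0 X2) X1 X3 - a (br X0 X3) X1 X2
  - a (br X1 X2) X0 X3 + a (br X1 X3) X0 X2 - a (br X2 X3) X0 X1.

Definition omega7 (X Y : 'cV[R]_4) : R := e2 3 4 X Y + e2 5 6 X Y.
Definition omega1 (X Y : 'cV[R]_4) : R := e2 3 5 X Y - e2 4 6 X Y.
Definition omega2 (X Y : 'cV[R]_4) : R := - e2 3 6 X Y - e2 4 5 X Y.

Definition theta (M : 'M[R]_4) (al : 'cV[R]_4 -> 'cV[R]_4 -> R)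
  (X Y : 'cV[R]_4) : R := - (al (M *m X) Y + al X (M *m Y)).

End Defs.

(* Let Theta1, Theta2, Theta3 be the differences of the two sides of the three
   equations: 2-forms on g1, pulled back to g along the projection g -> g1. Then
     d phi = e^71 /\ Theta1 + e^72 /\ Theta2 + e^12 /\ Theta3,
   a polynomial identity in the coordinates once phi is written through its
   interior products and the bracket through its structure constants.
   Evaluating d phi on (e7, e1, U, V), (e7, e2, U, V) and (e1, e2, U, V) with
   U, V in g1 isolates Theta1, Theta2 and Theta3 respectively. *)

From Pilot Require Import Defs.
From HB Require Import structures.
From mathcomp Require Import all_boot all_order all_algebra.
From mathcomp Require Import ring zify.
Import Order.TTheory GRing.Theory Num.Theory.
Local Open Scope ring_scope.

Lemma sum_ord7 (V : nmodType) (F : 'I_7 -> V) : \sum_(i < 7) F i =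
  F (inord 0) + F (inord 1) + F (inord 2) + F (inord 3) + F (inord 4)
  + F (inord 5) + F (inord 6).
Proof.
rewrite !big_ord_recr big_ord0 /= add0r.
by do !congr (_ + _); congr (F _); apply/val_inj; rewrite /= inordK.
Qed.

Lemma sum_ord4 (V : nmodType) (F : 'I_4 -> V) : \sum_(i < 4) F i =
  F (inord 0) + F (inord 1) + F (inord 2) + F (inord 3).
Proof.
rewrite !big_ord_recr big_ord0 /= add0r.
by do !congr (_ + _); congr (F _); apply/val_inj; rewrite /= inordK.
Qed.

(* [dual2 a b] is e^{(a+1)(b+1)}: indices are 0-based, as in Defs. *)
Definition dual2 {R : ringType} {n : nat} (a b : nat) (U V : 'cV[R]_n.+1) : R :=
  U (inord a) 0 * V (inord b) 0 - U (inord b) 0 * V (inord a) 0.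

Definition wedge22 {R : comRingType} {V : Type} (al be : V -> V -> R)
    (X0 X1 X2 X3 : V) : R :=
  al X0 X1 * be X2 X3 - al X0 X2 * be X1 X3 + al X0 X3 * be X1 X2
  + al X1 X2 * be X0 X3 - al X1 X3 * be X0 X2 + al X2 X3 * be X0 X1.

Lemma wedge22_eq0r {R : comRingType} {V : Type} (al be : V -> V -> R) X0 X1 X2 X3 :
  (forall X Y, be X Y = 0) -> wedge22 al be X0 X1 X2 X3 = 0.
Proof. by move=> be0; rewrite /wedge22 !be0; ring. Qed.

Section Coordinates.
Variable R : realFieldType.
Implicit Types (X Y Z : 'cV[R]_7) (U V : 'cV[R]_4).

Lemma e3E a b c X Y Z : e3 a.+1 b.+1 c.+1 X Y Z =
  X (inord a) 0 * Y (inord b) 0 * Z (inord c) 0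
  - X (inord a) 0 * Z (inord b) 0 * Y (inord c) 0
  - Y (inord a) 0 * X (inord b) 0 * Z (inord c) 0
  + Y (inord a) 0 * Z (inord b) 0 * X (inord c) 0
  + Z (inord a) 0 * X (inord b) 0 * Y (inord c) 0
  - Z (inord a) 0 * Y (inord b) 0 * X (inord c) 0.
Proof.
rewrite /e3 (expand_det_row _ ord0) !big_ord_recr big_ord0 /=.
rewrite /cofactor !(expand_det_row _ ord0) !big_ord_recr !big_ord0 /=.
by rewrite /cofactor !det_mx11 !mxE /= !subn1 /=; ring.
Qed.

Lemma e2E a b U V : e2 a.+3 b.+3 U V = dual2 a b U V.
Proof.
rewrite /e2 (expand_det_row _ ord0) !big_ord_recr big_ord0 /=.
by rewrite /cofactor !det_mx11 !mxE /= !subSS !subn0 /dual2; ring.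
Qed.

Lemma phiE Z X Y : phi Z X Y =
    Z (inord 0) 0 * (dual2 1 6 X Y + dual2 2 4 X Y - dual2 3 5 X Y)
  - Z (inord 1) 0 * (dual2 0 6 X Y + dual2 2 5 X Y + dual2 3 4 X Y)
  + Z (inord 2) 0 * (dual2 3 6 X Y - dual2 0 4 X Y + dual2 1 5 X Y)
  - Z (inord 3) 0 * (dual2 2 6 X Y - dual2 0 5 X Y - dual2 1 4 X Y)
  + Z (inord 4) 0 * (dual2 5 6 X Y + dual2 0 2 X Y - dual2 1 3 X Y)
  - Z (inord 5) 0 * (dual2 4 6 X Y + dual2 0 3 X Y + dual2 1 2 X Y)
  + Z (inord 6) 0 * (dual2 0 1 X Y + dual2 2 3 X Y + dual2 4 5 X Y).
Proof. by rewrite /phi !e3E /dual2; ring. Qed.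

Lemma mulmx4E (M : 'M[R]_4) U a : (M *m U) (inord a) 0 =
  M (inord a) (inord 0) * U (inord 0) 0 + M (inord a) (inord 1) * U (inord 1) 0
  + M (inord a) (inord 2) * U (inord 2) 0 + M (inord a) (inord 3) * U (inord 3) 0.
Proof. by rewrite mxE sum_ord4. Qed.

Lemma projE Z k : (k < 4)%N -> proj Z (inord k) 0 = Z (inord k.+2) 0.
Proof. by move=> k_lt4; rewrite mxE inordK // addn2. Qed.

Lemma embE U (k : 'I_7) :
  emb U k 0 = if (2 <= k < 6)%N then U (inord k.-2) 0 else 0.
Proof. by rewrite mxE; case: k => [[|[|[|[|[|[|[|k]]]]]]] Hk]. Qed.

Lemma proj_emb U : proj (emb U) = U.
Proof.
apply/matrixP => k l; have k2_lt7 : (k + 2 < 7)%N by have := ltn_ord k; lia.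
rewrite mxE embE inordK // addn2 /=.
by rewrite ltnS ltnS (ltn_ord k) inord_val ord1.
Qed.

Lemma ebnE i j : (i < 7)%N -> (j < 7)%N -> ebn R i (inord j) 0 = (i == j)%:R.
Proof.
by move=> i_lt7 j_lt7; rewrite /ebn /ebas mxE eqxx andbT -val_eqE /= !inordK // eq_sym.
Qed.

End Coordinates.

Section Closedness.
Variables (R : realFieldType) (x y z w : R) (A B C : 'M[R]_4).
Implicit Types (X Y : 'cV[R]_7) (U V : 'cV[R]_4) (M : 'M[R]_4).
Local Notation "[ X , Y ]" := (bracket x y z w A B C X Y).
Local Notation dphi := (d3 (bracket x y z w A B C) (@phi R)).
Local Notation a i j := (A (inord i) (inord j)).
Local Notation b i j := (B (inord i) (inord j)).
Local Notation c i j := (C (inord i) (inord j)).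

(* Structure constants, 0-based: [bracket_coef i j k] is the coefficient of e_(k+1) in
   [e_(i+1), e_(j+1)]. *)
Definition g1_coef M (j k : nat) : R :=
  if (2 <= j < 6)%N && (2 <= k < 6)%N then M (inord k.-2) (inord j.-2) else 0.

Definition ad7_coef (j k : nat) : R :=
  if j == 0%N then (if k == 0%N then x else if k == 1%N then y else 0)
  else if j == 1%N then (if k == 0%N then z else if k == 1%N then w else 0)
  else g1_coef A j k.

Definition bracket_coef (i j k : nat) : R :=
  if i == 6%N then ad7_coef j k
  else if j == 6%N then - ad7_coef i k
  else if i == 0%N then g1_coef B j k
  else if j == 0%N then - g1_coef B i k
  else if i == 1%N then g1_coef C j k
  else if j == 1%N then - g1_coef C i k
  else 0.

Lemma mulmx_proj_ebasE M (j : 'I_7) (i : 'I_4) :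
  (M *m proj (ebas R j)) i 0 = if (2 <= j < 6)%N then M i (inord j.-2) else 0.
Proof.
rewrite mxE sum_ord4 !mxE !eqxx !andbT -!val_eqE /= !inordK // !addn2.
by case: j => [[|[|[|[|[|[|[|j]]]]]]] Hj] //=; ring.
Qed.

Lemma ad1E M (j k : 'I_7) : ad1 M j k 0 = g1_coef M j k.
Proof.
rewrite /ad1 embE /g1_coef.
by case: k => [[|[|[|[|[|[|[|k]]]]]]] Hk] //=; rewrite ?mulmx_proj_ebasE;
  case: j => [[|[|[|[|[|[|[|j]]]]]]] Hj].
Qed.

Lemma ad7E (j k : 'I_7) : ad7 x y z w A j k 0 = ad7_coef j k.
Proof.
rewrite /ad7 /ad7_coef; case: ifP => _; last case: ifP => _; last exact: ad1E.
all: rewrite !mxE !eqxx !andbT -!val_eqE /= !inordK //.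
all: by case: k => [[|[|[|[|[|[|[|k]]]]]]] Hk] //=; ring.
Qed.

Lemma brbE (i j k : 'I_7) : brb x y z w A B C i j k 0 = bracket_coef i j k.
Proof.
rewrite /brb /bracket_coef.
by do !case: ifP => _; rewrite ?ad7E ?ad1E // mxE ?ad7E ?ad1E.
Qed.

Lemma bracket_coord X Y (k : 'I_7) :
  [X, Y] k 0 = \sum_(i < 7) \sum_(j < 7) X i 0 * Y j 0 * bracket_coef i j k.
Proof.
rewrite summxE; apply: eq_bigr => i _; rewrite summxE; apply: eq_bigr => j _.
by rewrite mxE brbE.
Qed.

Definition ad_g1 X (k l : nat) : R :=
  X (inord 6) 0 * a k l + X (inord 0) 0 * b k l + X (inord 1) 0 * c k l.

Ltac expand_bracket :=
  rewrite bracket_coord; under eq_bigr => ? _ do rewrite sum_ord7;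
  rewrite sum_ord7 !inordK // /bracket_coef /ad7_coef /g1_coef /=.

Lemma bracket_e1 X Y : [X, Y] (inord 0) 0 =
  x * (X (inord 6) 0 * Y (inord 0) 0 - X (inord 0) 0 * Y (inord 6) 0)
  + z * (X (inord 6) 0 * Y (inord 1) 0 - X (inord 1) 0 * Y (inord 6) 0).
Proof. by expand_bracket; ring. Qed.

Lemma bracket_e2 X Y : [X, Y] (inord 1) 0 =
  y * (X (inord 6) 0 * Y (inord 0) 0 - X (inord 0) 0 * Y (inord 6) 0)
  + w * (X (inord 6) 0 * Y (inord 1) 0 - X (inord 1) 0 * Y (inord 6) 0).
Proof. by expand_bracket; ring. Qed.

Lemma bracket_e7 X Y : [X, Y] (inord 6) 0 = 0.
Proof. by expand_bracket; ring. Qed.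

Lemma bracket_g1 X Y k : (k < 4)%N -> [X, Y] (inord k.+2) 0 =
    ad_g1 X k 0 * Y (inord 2) 0 + ad_g1 X k 1 * Y (inord 3) 0
  + ad_g1 X k 2 * Y (inord 4) 0 + ad_g1 X k 3 * Y (inord 5) 0
  - (ad_g1 Y k 0 * X (inord 2) 0 + ad_g1 Y k 1 * X (inord 3) 0
  + ad_g1 Y k 2 * X (inord 4) 0 + ad_g1 Y k 3 * X (inord 5) 0).
Proof. by rewrite /ad_g1; case: k => [|[|[|[|k]]]] // _; expand_bracket; ring. Qed.

Definition dphi71 U V : R := theta A (@omega1 R) U V
  - (theta B (@omega7 R) U V + x * omega1 U V + y * omega2 U V).
Definition dphi72 U V : R := theta A (@omega2 R) U V
  - (theta C (@omega7 R) U V + z * omega1 U V + w * omega2 U V).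
Definition dphi12 U V : R := theta B (@omega2 R) U V - theta C (@omega1 R) U V.

Ltac expand_dphi :=
  rewrite /theta /omega7 /omega1 /omega2 !e2E /dual2 !mulmx4E; ring.

Lemma dphi71E U V : dphi71 U V =
    (b 0 0 + b 1 1 - a 2 1 - a 3 0) * dual2 0 1 U V
  + (b 1 2 - b 3 0 - a 0 0 - a 2 2 - x) * dual2 0 2 U V
  + (b 1 3 + b 2 0 + a 1 0 - a 2 3 + y) * dual2 0 3 U V
  + (a 3 2 - a 0 1 - b 0 2 - b 3 1 + y) * dual2 1 2 U V
  + (b 2 1 - b 0 3 + a 1 1 + a 3 3 + x) * dual2 1 3 U V
  + (a 0 3 + a 1 2 + b 2 2 + b 3 3) * dual2 2 3 U V.
Proof. by rewrite /dphi71; expand_dphi. Qed.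

Lemma dphi72E U V : dphi72 U V =
    (c 0 0 + c 1 1 - a 2 0 + a 3 1) * dual2 0 1 U V
  + (c 1 2 - c 3 0 + a 1 0 + a 3 2 - z) * dual2 0 2 U V
  + (c 1 3 + c 2 0 + a 0 0 + a 3 3 + w) * dual2 0 3 U V
  + (a 1 1 + a 2 2 - c 0 2 - c 3 1 + w) * dual2 1 2 U V
  + (c 2 1 - c 0 3 + a 0 1 + a 2 3 + z) * dual2 1 3 U V
  + (a 0 2 - a 1 3 + c 2 2 + c 3 3) * dual2 2 3 U V.
Proof. by rewrite /dphi72; expand_dphi. Qed.

Lemma dphi12E U V : dphi12 U V =
    (b 3 1 - b 2 0 + c 2 1 + c 3 0) * dual2 0 1 U V
  + (b 1 0 + b 3 2 + c 0 0 + c 2 2) * dual2 0 2 U V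
  + (b 0 0 + b 3 3 - c 1 0 + c 2 3) * dual2 0 3 U V
  + (b 1 1 + b 2 2 + c 0 1 - c 3 2) * dual2 1 2 U V
  + (b 0 1 + b 2 3 - c 1 1 - c 3 3) * dual2 1 3 U V
  + (b 0 2 - b 1 3 - c 0 3 - c 1 2) * dual2 2 3 U V.
Proof. by rewrite /dphi12; expand_dphi. Qed.

Definition pull_g1 (al : 'cV[R]_4 -> 'cV[R]_4 -> R) X Y : R :=
  al (proj X) (proj Y).

Lemma d3_phiE X0 X1 X2 X3 :
  dphi X0 X1 X2 X3 =
    wedge22 (dual2 6 0) (pull_g1 dphi71) X0 X1 X2 X3
  + wedge22 (dual2 6 1) (pull_g1 dphi72) X0 X1 X2 X3
  + wedge22 (dual2 0 1) (pull_g1 dphi12) X0 X1 X2 X3.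
Proof.
rewrite /d3 !phiE !bracket_e1 !bracket_e2 !bracket_e7 !bracket_g1 // /ad_g1.
rewrite /wedge22 /pull_g1 !dphi71E !dphi72E !dphi12E /dual2 !projE //.
ring.
Qed.

Lemma d3_phi_components U V :
  [/\ dphi (ebn R 6) (ebn R 0) (emb U) (emb V) = dphi71 U V,
      dphi (ebn R 6) (ebn R 1) (emb U) (emb V) = dphi72 U V
    & dphi (ebn R 0) (ebn R 1) (emb U) (emb V) = dphi12 U V].
Proof.
split; rewrite d3_phiE /wedge22 /pull_g1 !proj_emb !dphi71E !dphi72E !dphi12E.
all: rewrite /dual2 !projE // !ebnE // !embE !inordK //=; ring.
Qed.

End Closedness.

Theorem corollary2p5 (R : realFieldType) (x y z w : R) (A B C : 'M[R]_4)
  (htrB : \tr B = 0) (htrC : \tr C = 0)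
  (hAB : A *m B - B *m A = x *: B + y *: C)
  (hAC : A *m C - C *m A = z *: B + w *: C)
  (hBC : B *m C - C *m B = 0) :
  (forall X0 X1 X2 X3 : 'cV[R]_7,
      d3 (bracket x y z w A B C) (@phi R) X0 X1 X2 X3 = 0)
  <->
  [/\ forall X Y : 'cV[R]_4,
        theta A (@omega1 R) X Y
        = theta B (@omega7 R) X Y + x * omega1 X Y + y * omega2 X Y,
      forall X Y : 'cV[R]_4,
        theta A (@omega2 R) X Y
        = theta C (@omega7 R) X Y + z * omega1 X Y + w * omega2 X Y
    & forall X Y : 'cV[R]_4,
        theta B (@omega2 R) X Y = theta C (@omega1 R) X Y].

Proof.
clear htrB htrC hAB hAC hBC.
split=> [dphi0 | [h71 h72 h12] X0 X1 X2 X3].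
  split=> U V; apply/eqP; rewrite -subr_eq0; apply/eqP;
    have [e71 e72 e12] := d3_phi_components R x y z w A B C U V.
  - by rewrite -[LHS]/(dphi71 R x y A B U V) -e71 dphi0.
  - by rewrite -[LHS]/(dphi72 R z w A C U V) -e72 dphi0.
  - by rewrite -[LHS]/(dphi12 R B C U V) -e12 dphi0.
have d71 U V : dphi71 R x y A B U V = 0 by rewrite /dphi71 h71 subrr.
have d72 U V : dphi72 R z w A C U V = 0 by rewrite /dphi72 h72 subrr.
have d12 U V : dphi12 R B C U V = 0 by rewrite /dphi12 h12 subrr.
by rewrite d3_phiE !wedge22_eq0r ?addr0 // => U V; rewrite /pull_g1 ?d71 ?d72 ?d12.
Qed.
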